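(* Let $f:\mathbb R^n\to\mathbb R$ be a non-degenerate polynomial with $f(0)=0$, and write $\mathbf 1=(1,\dots,1)$. (i) If $\mathbf 1\notin\Gamma_+(f)$, then $L_e(f)>0$. (ii) If $\mathbf 1\in\Gamma(f)$, then $L_e(f)=0$ and $\Gamma^{(1)}_{\max}(f)\neq\emptyset$. (iii) If $\mathbf 1$ lies in the interior of $\Gamma_+(f)$, then $L_e(f)=0$ and $\Gamma^{(1)}_{\max}(f)=\emptyset$.
   Context: Write $f=\sum_\nu c_\nu x^\nu$. $\Gamma_+(f)$ (Newton polyhedron) is the convex hull of $\bigcup_{c_\nu\ne0}(\nu+\mathbb R^n_{\ge0})$; $\Gamma(f)$ (Newton boundary) is the union of its compact faces. For $a\in\mathbb R^n_{\ge0}$: $m_f(a)=\min\{\langle a,\nu\rangle:\nu\in\Gamma_+(f)\}$, $\gamma_f(a)=\{\nu\in\Gamma_+(f):\langle a,\nu\rangle=m_f(a)\}$, $s(a)=\sum_ia_i$, $h(a)=m_f(a)-s(a)$. For a face $\gamma$, $f_\gamma=\sum_{\nu\in\gamma}c_\nu x^\nu$; $f$ is non-degenerate if for every compact face $\gamma$, $\nabla f_\gamma$ does not vanish at points of $(\mathbb R^* )^n$ where $f_\gamma=0$. Dual Newton polyhedron: on $\mathbb R^n_{\ge0}$ put $a\sim b$ iff $\gamma_f(a)=\gamma_f(b)$; the equivalence classes give a subdivision of $\mathbb R^n_{\ge0}$ into cones. $\Gamma^{(1)}(f)$ is the set of primitive integer generators of the one-dimensional cones of this subdivision, and $\Gamma^{(1)}_+(f)=\{a\in\Gamma^{(1)}(f):m_f(a)>0\}$.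 The leading exponent is $L_e(f)=\sup\bigl(\{0\}\cup\{1-s(a)/m_f(a):a\in\Gamma^{(1)}_+(f)\}\bigr)$, and $\Gamma^{(1)}_{\max}(f)=\{a\in\Gamma^{(1)}_+(f):1-s(a)/m_f(a)=L_e(f)\}$. *)

From HB Require Import structures.
From mathcomp Require Import all_boot all_order all_algebra.
From mathcomp Require Import boolp classical_sets reals.
From mathcomp Require Import mpoly.
Set Implicit Arguments. Unset Strict Implicit. Unset Printing Implicit Defensive.
Import Order.TTheory GRing.Theory Num.Theory.
Local Open Scope ring_scope.

Section Newton.
Variables (R : realType) (n : nat).
Implicit Types (f : {mpoly R[n]}) (x y a b c : 'I_n -> R).

Definition dotR a x : R := \sum_(i < n) a i * x i.

Definition expR (m : 'X_{1..n}) : 'I_n -> R := fun i => (m i)%:R.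

Definition natR (a : 'I_n -> nat) : 'I_n -> R := fun i => (a i)%:R.

(* Newton polyhedron Gamma_+(f): convex hull of the union of the orthants
   nu + R^n_{>=0}, nu in the support of f, i.e. the points dominating
   (coordinatewise) a convex combination of support points. *)
Definition newton_plus f (x : 'I_n -> R) : Prop :=
  exists lam : 'X_{1..n} -> R,
    [/\ forall m, 0 <= lam m,
        \sum_(m <- msupp f) lam m = 1
      & forall i, \sum_(m <- msupp f) lam m * (m i)%:R <= x i].

Definition face f c (y : 'I_n -> R) : Prop :=
  newton_plus f y /\ forall z, newton_plus f z -> dotR c y <= dotR c z.

(* the face is non-empty and compact (it is closed; compact = bounded) *)
Definition compact_face f c : Prop :=
  (exists y, face f c y) /\
  exists B : R, forall y, face f c y -> forall i, `|y i| <= B.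

Definition newton_boundary f (x : 'I_n -> R) : Prop :=
  exists c, compact_face f c /\ face f c x.

Definition newton_interior f (x : 'I_n -> R) : Prop :=
  exists2 e : R, 0 < e &
    forall y, (forall i, `|y i - x i| < e) -> newton_plus f y.

Definition face_poly f c : {mpoly R[n]} :=
  \sum_(m <- msupp f | `[< face f c (expR m) >]) f@_m *: 'X_[m].

Definition nondegenerate_newton f : Prop :=
  forall c, compact_face f c ->
  forall x : 'I_n -> R, (forall i, x i != 0) ->
    (face_poly f c).@[x] = 0 -> exists i, (mderiv i (face_poly f c)).@[x] != 0.

Definition nonneg a : Prop := forall i, 0 <= a i.

(* m_f(a) = min { <a, nu> : nu in Gamma_+(f) }, for a >= 0 and f != 0;
   defined as the infimum of that set (it is attained). *)
Definition mf f a : R := inf [set dotR a x | x in newton_plus f].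

Definition gammaf f a (y : 'I_n -> R) : Prop :=
  newton_plus f y /\ dotR a y = mf f a.

Definition sR a : R := \sum_(i < n) a i.

(* Gamma^(1)(f): primitive integer generators of the one-dimensional cones
   of the dual Newton fan, i.e. of the equivalence classes of
   a ~ b <-> gamma_f(a) = gamma_f(b) on R^n_{>=0} which are open rays. *)
Definition dual1 f (a : 'I_n -> nat) : Prop :=
  [/\ exists i, a i != 0%N,
      \big[gcdn/0%N]_(i < n) a i = 1%N
    & forall b, nonneg b ->
        (forall y, gammaf f b y <-> gammaf f (natR a) y) ->
        exists2 t : R, 0 < t & b = (fun i => t * natR a i)].

Definition dual1_plus f (a : 'I_n -> nat) : Prop :=
  dual1 f a /\ 0 < mf f (natR a).

Definition ratio f (a : 'I_n -> nat) : R := 1 - sR (natR a) / mf f (natR a).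

Definition Le f : R :=
  sup [set r | r = 0 \/ exists a : 'I_n -> nat, dual1_plus f a /\ r = ratio f a].

Definition dual1_max f (a : 'I_n -> nat) : Prop :=
  dual1_plus f a /\ ratio f a = Le f.

End Newton.

From Pilot Require Import Defs.
From HB Require Import structures.
From mathcomp Require Import all_boot all_order all_algebra.
From mathcomp Require Import boolp classical_sets reals.
From mathcomp Require Import mpoly.
From mathcomp Require Import ring lra.
Set Implicit Arguments. Unset Strict Implicit. Unset Printing Implicit Defensive.
Import Order.TTheory GRing.Theory Num.Theory.
Local Open Scope ring_scope.

(* If 1 is not in Gamma_+(f), Farkas' lemma (proved here by Fourier-Motzkin
   elimination) gives a weight a >= 0 with <a, nu> >= 1 on the support of f
   and s(a) < 1.  On the polyhedron of such weights s decreases towards a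
   vertex; a vertex is rational, has m_f(a) = 1 and spans a ray of the dual
   Newton fan, so its primitive integer multiple u lies in Gamma^(1)_+(f) with
   1 - s(u)/m_f(u) = 1 - s(a) > 0.  If 1 is in Gamma_+(f), then
   m_f(u) <= <u, 1> = s(u) for all u, so L_e(f) = 0.  When 1 lies on a compact
   face, the normal of that face scaled to s = 1 yields in the same way a ray
   with ratio 0; when 1 is interior the inequality is strict. *)

Lemma In_cat (T : Type) (x : T) s1 s2 : List.In x (s1 ++ s2) <-> List.In x s1 \/ List.In x s2.
Proof.
elim: s1 => [|y s IH] /=; first by split => [|[]] //; right.
by rewrite IH; tauto.
Qed.

Lemma In_filter (T : Type) (p : pred T) x s : List.In x (filter p s) <-> List.In x s /\ p x.
Proof.
elim: s => [|y s IH] /=; first by split => [|[]].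
case: ifP => py /=; rewrite IH; split.
- by case=> [<-|[]]; tauto.
- by case=> [[->|]]; tauto.
- by tauto.
- by case=> [[E|?] px]; [move: py; rewrite E px|tauto].
Qed.

Lemma In_map (T U : Type) (f : T -> U) y s : List.In y (map f s) <-> exists x, List.In x s /\ y = f x.
Proof.
elim: s => [|x s IH] /=; first by split => [[]|[x []]].
rewrite IH; split.
- by case=> [<-|[z [? ->]]]; [exists x; tauto|exists z; tauto].
- by case=> z [[<-|?] ->]; [left|right; exists z].
Qed.

Lemma In_allpairs (T U V : Type) (f : T -> U -> V) y s t :
  List.In y [seq f a b | a <- s, b <- t] <->
  exists a b, [/\ List.In a s, List.In b t & y = f a b].
Proof.
elim: s => [|a s IH] /=; first by split => [[]|[a [b [[]]]]].
rewrite In_cat In_map IH; split.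
- case=> [[b [? ->]]|[a' [b [? ? ->]]]]; [exists a, b|exists a', b]; split => //; tauto.
- case=> a' [b [[<-|?] ? ->]]; first by left; exists b.
  by right; exists a', b.
Qed.

Lemma In_mem (T : eqType) (x : T) s : x \in s -> List.In x s.
Proof. by elim: s => [//|y s IH]; rewrite inE => /orP [/eqP ->|/IH]; [left|right]. Qed.

Section FourierMotzkin.
Variable R : realType.

Lemma ex_argmax_In (T : Type) (F : T -> R) (s : seq T) : s <> [::] ->
  exists x, List.In x s /\ forall y, List.In y s -> F y <= F x.
Proof.
elim: s => [//|a [|b s] IH] _; first by exists a; split; [left|move=> y [<-|[]]].
have [//|x [Hx Hm]] := IH.
have [le|lt] := leP (F a) (F x).
- by exists x; split; [right|move=> y [<-//|/Hm]].
- exists a; split; first by left.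
  by move=> y [<-//|/Hm H]; exact: le_trans H (ltW lt).
Qed.

Lemma ex_argmin_In (T : Type) (F : T -> R) (s : seq T) : s <> [::] ->
  exists x, List.In x s /\ forall y, List.In y s -> F x <= F y.
Proof.
move=> /(ex_argmax_In (fun x => - F x)) [x [Hx H]].
by exists x; split => // y /H; rewrite lerN2.
Qed.

Lemma ex_between_In (T U : Type) (L : T -> R) (G : U -> R) ls us :
  (forall a b, List.In a ls -> List.In b us -> L a <= G b) ->
  exists t, (forall a, List.In a ls -> L a <= t) /\ (forall b, List.In b us -> t <= G b).
Proof.
case: ls => [|a0 ls] H.
  case: us H => [|b0 us] H; first by exists 0.
  have [//|b [_ Hb]] := @ex_argmin_In _ G (b0 :: us).
  by exists (G b); split.
have [//|a [Ha Hm]] := @ex_argmax_In _ L (a0 :: ls).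
by exists (L a); split => // b Hb; apply: H.
Qed.

(* Vectors are [nat -> R]; only their first [m] coordinates are read by
   [dotm m], which lets the elimination drop one coordinate at a time. *)
Definition dotm (m : nat) (g x : nat -> R) := \sum_(i < m) g i * x i.

Definition constraint := ((nat -> R) * R)%type.

Definition satisfies m (S : seq constraint) x :=
  forall c, List.In c S -> dotm m c.1 x <= c.2.

Inductive consequence (S : seq constraint) : (nat -> R) -> R -> Prop :=
| consequence_in g h : List.In (g, h) S -> consequence S g h
| consequence_add g1 h1 g2 h2 : consequence S g1 h1 -> consequence S g2 h2 ->
    consequence S (fun i => g1 i + g2 i) (h1 + h2)
| consequence_scale c g h : 0 <= c -> consequence S g h ->
    consequence S (fun i => c * g i) (c * h)
| consequence_weaken g h h' : h <= h' -> consequence S g h -> consequence S g h'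
| consequence_ext g g' h : (forall i, g i = g' i) -> consequence S g h ->
    consequence S g' h.

Lemma consequence_trans S S' : (forall c, List.In c S' -> consequence S c.1 c.2) ->
  forall g h, consequence S' g h -> consequence S g h.
Proof.
move=> HS g h; elim => {g h} [g h /HS //|*|*|*|*].
- exact: consequence_add.
- exact: consequence_scale.
- by apply: consequence_weaken; eassumption.
- by apply: consequence_ext; eassumption.
Qed.

Lemma consequence_coord0 S k : (forall c, List.In c S -> c.1 k = 0) ->
  forall g h, consequence S g h -> g k = 0.
Proof.
move=> HS g h; elim => {g h} [g h /HS //|||//|g g' h E _ H].
- by move=> g1 h1 g2 h2 _ -> _ ->; rewrite addr0.
- by move=> c g h _ _ ->; rewrite mulr0.
- by rewrite -E.
Qed.

Lemma dotm_recr m g x : dotm m.+1 g x = dotm m g x + g m * x m.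
Proof. by rewrite /dotm big_ord_recr. Qed.

Lemma eq_dotm m g x y : (forall i, (i < m)%N -> x i = y i) -> dotm m g x = dotm m g y.
Proof. by move=> E; apply: eq_bigr => i _; rewrite E. Qed.

Lemma dotm_comb m c1 c2 g1 g2 x :
  dotm m (fun i => c1 * g1 i + c2 * g2 i) x = c1 * dotm m g1 x + c2 * dotm m g2 x.
Proof. by rewrite /dotm !mulr_sumr -big_split; apply: eq_bigr => i _ /=; ring. Qed.

(* The nonnegative combination of [p] (with [p.1 m > 0]) and [q]
   (with [q.1 m < 0]) in which the coordinate [m] cancels. *)
Definition eliminate (m : nat) (p q : constraint) : constraint :=
  (fun i => - q.1 m * p.1 i + p.1 m * q.1 i, - q.1 m * p.2 + p.1 m * q.2).

Definition elim_system m (S : seq constraint) : seq constraint :=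
  [seq c <- S | c.1 m == 0] ++
  [seq eliminate m p q | p <- [seq c <- S | 0 < c.1 m], q <- [seq c <- S | c.1 m < 0]].

Lemma elim_system_consequence m S c :
  List.In c (elim_system m S) -> consequence S c.1 c.2.
Proof.
rewrite In_cat In_filter In_allpairs.
case=> [[Hc _]|[[gp hp] [[gq hq] [Hp Hq ->]]]]; first by case: c Hc => ??; apply: consequence_in.
move: Hp Hq; rewrite !In_filter => -[Hp pp] [Hq qn] /=.
by apply: consequence_add; apply: consequence_scale;
  rewrite ?oppr_ge0 ?ltW //; apply: consequence_in.
Qed.

Lemma elim_system_coord m S c : List.In c (elim_system m S) -> c.1 m = 0.
Proof.
rewrite In_cat In_filter In_allpairs.
by case=> [[_ /eqP //]|[p [q [_ _ ->]]]] /=; ring.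
Qed.

(* A solution of the eliminated system extends to [S] by any value of the
   coordinate [m] between the lower bounds given by the constraints with
   [c.1 m < 0] and the upper bounds given by those with [c.1 m > 0]. *)
Lemma elim_system_infeasible m S : (forall x, ~ satisfies m.+1 S x) ->
  forall x, ~ satisfies m (elim_system m S) x.
Proof.
move=> Hinf x Hx; pose d (c : constraint) := dotm m c.1 x.
set P := filter (fun c : constraint => 0 < c.1 m) S.
set N := filter (fun c : constraint => c.1 m < 0) S.
have Hb q p : List.In q N -> List.In p P ->
    (q.2 - d q) / q.1 m <= (p.2 - d p) / p.1 m.
  move=> Hq Hp.
  have /Hx : List.In (eliminate m p q) (elim_system m S).
    by rewrite In_cat In_allpairs; right; exists p, q.
  rewrite /eliminate /= dotm_comb => Hc.
  move: Hq Hp; rewrite !In_filter => -[_ qn] [_ pp].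
  rewrite ler_pdivlMr // mulrAC ler_ndivrMr //; rewrite /d; lra.
have [t [Ht1 Ht2]] := ex_between_In Hb.
apply: (Hinf (fun i => if i == m then t else x i)) => c Hc.
rewrite dotm_recr (@eq_dotm _ _ _ x); last by move=> i lt; rewrite ifN // neq_ltn lt.
rewrite eqxx; case: (ltrgtP (c.1 m) 0) => [neg|pos|z].
- have /Ht1 : List.In c N by rewrite In_filter.
  rewrite ler_ndivrMr // /d; lra.
- have /Ht2 : List.In c P by rewrite In_filter.
  rewrite ler_pdivlMr // /d; lra.
- have /Hx : List.In c (elim_system m S) by rewrite In_cat In_filter z eqxx; left.
  rewrite z; lra.
Qed.

Theorem fourier_motzkin m (S : seq constraint) : (forall x, ~ satisfies m S x) ->
  exists g h, [/\ consequence S g h, (forall i, (i < m)%N -> g i = 0) & h < 0].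
Proof.
elim: m S => [|m IH] S Hinf.
  have : ~ forall c, List.In c S -> 0 <= c.2.
    move=> H; apply: (Hinf (fun _ => 0)) => c Hc; rewrite /dotm big_ord0; exact: H.
  move=> /existsNP [[g h] /not_implyP [Hc /negP]]; rewrite -ltNge => lt.
  by exists g, h; split => //; apply: consequence_in.
have [g [h [Hd Hg Hh]]] := IH _ (elim_system_infeasible Hinf).
exists g, h; split => //; first exact: consequence_trans (@elim_system_consequence m S) _ _ Hd.
move=> i; rewrite ltnS leq_eqVlt => /orP [/eqP ->|]; last exact: Hg.
exact: consequence_coord0 (@elim_system_coord m S) _ _ Hd.
Qed.

End FourierMotzkin.

Section DotR.
Variables (R : realType) (n : nat).
Implicit Types (a b c d p x : 'I_n -> R).

Lemma dotRC a b : dotR a b = dotR b a.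
Proof. by apply: eq_bigr => i _; rewrite mulrC. Qed.

Lemma dotR_addZr c a d t : dotR c (fun j => a j + t * d j) = dotR c a + t * dotR c d.
Proof. by rewrite /dotR mulr_sumr -big_split; apply: eq_bigr => i _ /=; ring. Qed.

Lemma dotR_addZl c a d t : dotR (fun j => a j + t * d j) c = dotR a c + t * dotR d c.
Proof. by rewrite !(dotRC _ c) dotR_addZr. Qed.

Lemma dotRNr c d : dotR c (fun j => - d j) = - dotR c d.
Proof. by rewrite /dotR -sumrN; apply: eq_bigr => j _; rewrite mulrN. Qed.

Lemma dotRNl c d : dotR (fun j => - d j) c = - dotR d c.
Proof. by rewrite dotRC dotRNr dotRC. Qed.

Lemma dotR_deltal (i : 'I_n) c d : (forall j, c j = (i == j)%:R) -> dotR c d = d i.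
Proof.
move=> E; rewrite /dotR (bigD1 i) //= big1 ?addr0; first by rewrite E eqxx mul1r.
by move=> j ji; rewrite E eq_sym (negbTE ji) mul0r.
Qed.

Lemma dotR_deltar a (i : 'I_n) : dotR a (fun j => (i == j)%:R) = a i.
Proof. by rewrite dotRC (dotR_deltal _ (fun j => erefl _)). Qed.

Lemma dotR_ge0 a b : nonneg a -> nonneg b -> 0 <= dotR a b.
Proof. by move=> Ha Hb; apply: sumr_ge0 => i _; apply: mulr_ge0. Qed.

Lemma dotR1 a : dotR a (fun _ => 1) = sR a.
Proof. by apply: eq_bigr => i _; rewrite mulr1. Qed.

Lemma exists_neg_coord d p : (forall i, 0 < p i) -> dotR d p <= 0 ->
  (exists i, d i != 0) -> exists i, d i < 0.
Proof.
move=> Hp Hd [i0 Hi0]; apply: contrapT => Hn.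
have Hge : nonneg d by move=> i; rewrite leNgt; apply/negP => ?; apply: Hn; exists i.
have /eqP : dotR d p = 0.
  by apply/eqP; rewrite eq_le Hd dotR_ge0 // => i; exact: ltW.
rewrite psumr_eq0 /=; last by move=> i _; rewrite mulr_ge0 // ltW.
move=> /allP /(_ i0 (mem_index_enum _)) /=; rewrite mulf_eq0 (negbTE Hi0) /=.
by rewrite gt_eqF.
Qed.

End DotR.

Section Vertex.
Variables (R : realType) (n K : nat) (g : 'I_K -> 'I_n -> R) (h : 'I_K -> R).

Definition feasible (a : 'I_n -> R) := forall k, h k <= dotR (g k) a.
Definition tight (a : 'I_n -> R) k := dotR (g k) a == h k.
Definition vertex (a : 'I_n -> R) := forall d : 'I_n -> R,
  (forall k, tight a k -> dotR (g k) d = 0) -> forall i, d i = 0.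

(* The system contains the sign constraints [0 <= a i]. *)
Hypothesis sign_constraints :
  forall i, exists k, (forall j, g k j = (i == j)%:R) /\ h k = 0.
Variable p : 'I_n -> R.
Hypothesis p_gt0 : forall i, 0 < p i.

Let slack a := [set k | ~~ tight a k].

Lemma descent_direction a : ~ vertex a -> exists d : 'I_n -> R,
  [/\ forall k, tight a k -> dotR (g k) d = 0, dotR d p <= 0 & exists i, d i < 0].
Proof.
move=> nV.
have [d [Hk [i Hi]]] : exists d, (forall k, tight a k -> dotR (g k) d = 0) /\
    exists i, d i != 0.
  apply: contrapT => H; apply: nV => d Hd i; apply: contrapT => /eqP Hdi.
  by apply: H; exists d; split => //; exists i.
have [le|lt] := leP (dotR d p) 0.
  by exists d; split => //; apply: exists_neg_coord => //; exists i.
have le : dotR (fun j => - d j) p <= 0 by rewrite dotRNl oppr_le0 ltW.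
exists (fun j => - d j); split => //.
- by move=> k /Hk; rewrite dotRNr => ->; rewrite oppr0.
- by apply: exists_neg_coord => //; exists i; rewrite oppr_eq0.
Qed.

(* Move along a descent direction until the first new constraint gets tight. *)
Lemma vertex_descent_step a : ~ vertex a -> feasible a ->
  exists a', [/\ feasible a', (#|slack a'| < #|slack a|)%N & dotR a' p <= dotR a p].
Proof.
move=> nV Ha; have [d [Hk Hdp [i1 Hi1]]] := descent_direction nV.
pose B := [seq k <- enum 'I_K | dotR (g k) d < 0].
pose F k := (dotR (g k) a - h k) / (- dotR (g k) d).
have HB : B <> [::].
  have [k1 [Hk1 _]] := sign_constraints i1.
  have : k1 \in B by rewrite mem_filter mem_enum (dotR_deltal _ Hk1) Hi1.
  by move=> + E; rewrite E.
have [k0 [Hk0B Hmin]] := ex_argmin_In F HB.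
move: (Hk0B); rewrite In_filter => -[_ gd0].
pose t := F k0.
have t0 : 0 <= t.
  by apply: divr_ge0; [rewrite subr_ge0; exact: Ha|rewrite oppr_ge0 ltW].
exists (fun j => a j + t * d j); split.
- move=> k; rewrite dotR_addZr.
  have [ge|lt] := leP 0 (dotR (g k) d).
    by have := Ha k; have := mulr_ge0 t0 ge; lra.
  have /Hmin : List.In k B.
    by rewrite In_filter; split => //; apply: In_mem; rewrite mem_enum.
  rewrite -/t /F ler_pdivlMr; last by rewrite oppr_gt0.
  lra.
- apply: proper_card; rewrite /slack; apply/properP; split.
  + apply/fintype.subsetP => k; rewrite !inE; apply: contra => Hkt.
    by rewrite /tight dotR_addZr (Hk _ Hkt) mulr0 addr0.
  + exists k0; rewrite !inE; first by apply/negP => /Hk /eqP; rewrite lt_eqF.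
    rewrite negbK /tight dotR_addZr /t /F; apply/eqP; field.
    by rewrite lt_eqF.
- by rewrite dotR_addZl gerDl mulr_ge0_le0.
Qed.

Lemma exists_vertex_le a0 : feasible a0 ->
  exists a, [/\ feasible a, vertex a & dotR a p <= dotR a0 p].
Proof.
move: {2}#|slack a0| (leqnn #|slack a0|) => N; elim: N a0 => [|N IH] a Hc Ha;
  have [V|nV] := pselect (vertex a); try by exists a.
  by have [a' [_ lt _]] := vertex_descent_step nV Ha; move: (leq_trans lt Hc).
have [a' [Ha' lt le]] := vertex_descent_step nV Ha.
have [a'' [H1 H2 H3]] := IH a' (leq_trans lt Hc) Ha'.
by exists a''; split => //; apply: le_trans le.
Qed.

End Vertex.

Section RationalVertex.
Variables (R : realType) (n K : nat) (G : 'I_K -> 'I_n -> nat) (H : 'I_K -> nat).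
Let g k j : R := (G k j)%:R.
Let h k : R := (H k)%:R.

(* The tight constraints have rational coefficients and determine [a], so [a]
   lies in the rational row space they span. *)
Lemma vertex_rational a : vertex g h a ->
  exists q : 'I_n -> rat, forall j, a j = ratr (q j).
Proof.
move=> V; pose tk k := tight g h a k.
pose TQ : 'M[rat]_(K, n) := \matrix_(k, j) (if tk k then (G k j)%:R else 0).
pose rQ : 'M[rat]_(1, K) := \row_k (if tk k then (H k)%:R else 0).
pose A : 'M[R]_(1, n) := \row_j a j.
have E1 : map_mx ratr rQ = A *m (map_mx ratr TQ)^T.
  apply/matrixP => i k; rewrite !mxE ord1 /=.
  rewrite (eq_bigr (fun j => if tk k then a j * g k j else 0)); last first.
    by move=> j _; rewrite !mxE; case: (tk k); rewrite ?ratr_nat ?rmorph0 ?mulr0.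
  case E: (tk k); last by rewrite rmorph0 big1.
  rewrite ratr_nat -[(H k)%:R]/(h k); move/eqP: E => <-; rewrite dotRC.
  by apply: eq_bigr.
have : (map_mx ratr rQ <= (map_mx (ratr : rat -> R) TQ^T))%MS.
  by rewrite -map_trmx E1 submxMl.
rewrite map_submx => /submxP [D ED].
exists (fun j => D 0 j) => j; apply/eqP; rewrite -subr_eq0; apply/eqP.
apply: (V (fun j => a j - ratr (D 0 j))) => k Tk.
have : rQ 0 k = (D *m TQ^T) 0 k by rewrite -ED.
rewrite !mxE /=; rewrite /tk in Tk *; rewrite Tk => Ek.
rewrite /dotR (eq_bigr (fun j => g k j * a j - ratr (D 0 j * (G k j)%:R))); last first.
  by move=> j' _; rewrite rmorphM rmorph_nat /g; ring.
rewrite sumrB -rmorph_sum.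
have -> : \sum_j D 0 j * (G k j)%:R = (H k)%:R :> rat.
  by rewrite Ek; apply: eq_bigr => j' _; rewrite !mxE /= (_ : tk k = true).
by rewrite rmorph_nat; move/eqP: Tk; rewrite /dotR => ->; rewrite subrr.
Qed.

End RationalVertex.

Section PrimitiveVector.
Variables (R : realType) (n : nat).

Lemma nat_multiple_of_rat (q : 'I_n -> rat) : (forall j, 0 <= q j) ->
  exists (w : 'I_n -> nat) (s : R), 0 < s /\ forall j, (w j)%:R = s * ratr (q j).
Proof.
move=> Hq; pose D : int := \prod_j denq (q j).
pose P j : int := \prod_(j' | j' != j) denq (q j').
have HP j : 0 < P j by apply: prodr_gt0 => j' _; exact: denq_gt0.
have HD : 0 < D by apply: prodr_gt0 => j' _; exact: denq_gt0.
pose w j : int := numq (q j) * P j.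
have Hw0 j : 0 <= w j by rewrite mulr_ge0 ?numq_ge0 // ltW.
have Hw j : (w j)%:~R = q j * D%:~R :> rat.
  by rewrite /D (bigD1 j) //= intrM (intrM _ (denq _)) mulrA -numqE.
exists (fun j => `|w j|%N), (D%:~R); split; first by rewrite ltr0z.
move=> j; rewrite natr_absz ger0_norm //.
have := congr1 (@ratr R) (Hw j).
by rewrite ratr_int (rmorphM (ratr : {rmorphism rat -> R})) rmorph_int => ->; rewrite mulrC.
Qed.

Lemma primitive_nat_multiple (w : 'I_n -> nat) : (exists i, w i != 0%N) ->
  exists (u : 'I_n -> nat) (t : R), [/\ 0 < t, forall j, (u j)%:R = t * (w j)%:R,
     \big[gcdn/0%N]_(i < n) u i = 1%N & exists i, u i != 0%N].
Proof.
move=> [i0 Hi0]; pose G0 := \big[gcdn/0%N]_(i < n) w i.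
have HG i : (G0 %| w i)%N by have /dvdn_biggcdP := dvdnn G0; apply.
have G0p : (0 < G0)%N.
  by rewrite lt0n; apply: contraNneq Hi0 => E; have := HG i0; rewrite E dvd0n.
pose u i := (w i %/ G0)%N.
have Hu i : (u i * G0)%N = w i by rewrite divnK.
have ui0 : u i0 != 0%N by apply: contraNneq Hi0 => E; rewrite -Hu E.
exists u, (G0%:R)^-1; split; [by rewrite invr_gt0 ltr0n| | |by exists i0].
  by move=> j; rewrite -(Hu j) natrM mulrCA mulVf ?mulr1 // pnatr_eq0 -lt0n.
pose g1 := \big[gcdn/0%N]_(i < n) u i.
have Hg1 i : (g1 %| u i)%N by have /dvdn_biggcdP := dvdnn g1; apply.
have g1p : (0 < g1)%N.
  by rewrite lt0n; apply: contraNneq ui0 => E; have := Hg1 i0; rewrite E dvd0n.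
have : (g1 * G0 %| G0)%N by apply/dvdn_biggcdP => i _; rewrite -Hu dvdn_mul.
move=> /(dvdn_leq G0p); rewrite -[X in (_ <= X)%N]mul1n leq_pmul2r //.
by move=> le; apply/eqP; rewrite eqn_leq le g1p.
Qed.

End PrimitiveVector.

Section NewtonPolyhedron.
Variables (R : realType) (n : nat) (f : {mpoly R[n]}).
Local Notation s := (msupp f).
Local Notation NP := (newton_plus f).
Local Notation eR := (expR R).

Lemma msupp_neq_nil : f != 0 -> exists m, m \in s.
Proof.
move=> Hf; case E: s => [|m0 t]; last by exists m0; rewrite mem_head.
by move/eqP: E; rewrite msupp_eq0 (negbTE Hf).
Qed.

Lemma newton_plus_mono x y : NP x -> (forall i, x i <= y i) -> NP y.
Proof.
by move=> [lam [H1 H2 H3]] Hxy; exists lam; split => // i; exact: le_trans (H3 i) (Hxy i).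
Qed.

Lemma newton_plus_msupp m : m \in s -> NP (eR m).
Proof.
move=> Hm; exists (fun m' => (m' == m)%:R); split => [m'|| i]; first by rewrite ler0n.
  rewrite (bigD1_seq m) //= ?msupp_uniq // eqxx big1 ?addr0 //.
  by move=> m' /negbTE ->.
rewrite (bigD1_seq m) //= ?msupp_uniq // eqxx mul1r big1 ?addr0 //.
by move=> m' /negbTE ->; rewrite mul0r.
Qed.

Lemma newton_plus_ge0 x i : NP x -> 0 <= x i.
Proof.
move=> [lam [H1 H2 H3]]; apply: le_trans (H3 i); apply: sumr_ge0 => m _.
by apply: mulr_ge0; rewrite ?ler0n.
Qed.

Lemma newton_plus_dotR_ge a c x : nonneg a ->
  (forall m, m \in s -> c <= dotR a (eR m)) -> NP x -> c <= dotR a x.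
Proof.
move=> Ha Hc [lam [H1 H2 H3]].
apply: (@le_trans _ _ (\sum_(m <- s) lam m * dotR a (eR m))).
  rewrite -[c]mul1r -H2 mulr_suml !big_seq; apply: ler_sum => m Hm.
  by apply: ler_wpM2l; [exact: H1|exact: Hc].
rewrite /dotR; under eq_bigr => m _ do rewrite mulr_sumr.
rewrite exchange_big /=; apply: ler_sum => i _.
rewrite (eq_bigr (fun m => a i * (lam m * (m i)%:R))); last by move=> m _; rewrite /expR; ring.
by rewrite -mulr_sumr; apply: ler_wpM2l; [exact: Ha|exact: H3].
Qed.

Lemma mf_le_dotR a x : nonneg a -> NP x -> mf f a <= dotR a x.
Proof.
move=> Ha Hx; apply: ge_inf; last by exists x.
by exists 0 => y [z Hz <-]; apply: dotR_ge0 => // i; exact: newton_plus_ge0.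
Qed.

Lemma mf_attained a c m0 : nonneg a -> m0 \in s -> dotR a (eR m0) = c ->
  (forall m, m \in s -> c <= dotR a (eR m)) -> mf f a = c.
Proof.
move=> Ha Hm0 E Hc; apply/eqP; rewrite eq_le; apply/andP; split.
  by rewrite -E; apply: mf_le_dotR => //; exact: newton_plus_msupp.
apply: lb_le_inf; first by exists c, (eR m0) => //; exact: newton_plus_msupp.
by move=> y [z Hz <-]; apply: newton_plus_dotR_ge.
Qed.

Lemma mf_ge0 a : nonneg a -> f != 0 -> 0 <= mf f a.
Proof.
move=> Ha /msupp_neq_nil [m Hm]; apply: lb_le_inf.
  by exists (dotR a (eR m)), (eR m) => //; exact: newton_plus_msupp.
by move=> y [z Hz <-]; apply: dotR_ge0 => // i; exact: newton_plus_ge0.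
Qed.

Definition admissible (a : 'I_n -> R) :=
  nonneg a /\ forall m, m \in s -> 1 <= dotR a (eR m).

(* [admissible] as a system [h k <= <g k, a>] with natural coefficients: one
   row per support point, then one sign constraint per coordinate. *)
Definition weight_row (k : 'I_(size s + n)) (j : 'I_n) : nat :=
  match split k with inl l => nth 0%MM s l j | inr i => nat_of_bool (i == j) end.
Definition weight_rhs (k : 'I_(size s + n)) : nat :=
  match split k with inl _ => 1%N | inr _ => 0%N end.
Definition weight_rowR k j : R := (weight_row k j)%:R.
Definition weight_rhsR k : R := (weight_rhs k)%:R.

Local Notation wfeasible := (feasible weight_rowR weight_rhsR).
Local Notation wvertex := (vertex weight_rowR weight_rhsR).

Let split_lshift (l : 'I_(size s)) : split (lshift n l) = inl l := unsplitK (inl l).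
Let split_rshift (i : 'I_n) : split (rshift (size s) i) = inr i := unsplitK (inr i).

Lemma weight_rowR_l l a : dotR (weight_rowR (lshift n l)) a = dotR a (eR (nth 0%MM s l)).
Proof. by rewrite dotRC; apply: eq_bigr => i _; rewrite /weight_rowR /weight_row split_lshift. Qed.
Lemma weight_rhsR_l l : weight_rhsR (lshift n l) = 1.
Proof. by rewrite /weight_rhsR /weight_rhs split_lshift. Qed.
Lemma weight_rowR_r i j : weight_rowR (rshift (size s) i) j = (i == j)%:R.
Proof. by rewrite /weight_rowR /weight_row split_rshift. Qed.
Lemma weight_rhsR_r i : weight_rhsR (rshift (size s) i) = 0.
Proof. by rewrite /weight_rhsR /weight_rhs split_rshift. Qed.

Lemma weight_sign_constraints : forall i, exists k,
  (forall j, weight_rowR k j = (i == j)%:R) /\ weight_rhsR k = 0.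
Proof. by move=> i; exists (rshift (size s) i); split; [exact: weight_rowR_r|exact: weight_rhsR_r]. Qed.

Lemma weight_feasibleE a : wfeasible a <-> admissible a.
Proof.
split=> [H|[Ha Hm] k]; last first.
  case: (split_ordP k) => [l ->|i ->].
    by rewrite weight_rhsR_l weight_rowR_l; apply: Hm; rewrite mem_nth.
  by rewrite weight_rhsR_r (dotR_deltal _ (weight_rowR_r i)).
split=> [i|m Hm].
  by have := H (rshift (size s) i); rewrite weight_rhsR_r (dotR_deltal _ (weight_rowR_r i)).
have Hi : (index m s < size s)%N by rewrite index_mem.
by have := H (lshift n (Ordinal Hi)); rewrite weight_rhsR_l weight_rowR_l /= nth_index.
Qed.

Lemma weight_tightP a k : tight weight_rowR weight_rhsR a k ->
  (exists2 m, m \in s &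
     dotR a (eR m) = 1 /\ forall d, dotR (weight_rowR k) d = dotR d (eR m))
  \/ (exists i, a i = 0 /\ forall d, dotR (weight_rowR k) d = d i).
Proof.
rewrite /tight; case: (split_ordP k) => [l ->|i ->].
  rewrite weight_rowR_l weight_rhsR_l => /eqP E; left.
  by exists (nth 0%MM s l); [rewrite mem_nth|split => // d; rewrite weight_rowR_l].
rewrite weight_rhsR_r (dotR_deltal _ (weight_rowR_r i)) => /eqP E; right.
by exists i; split => // d; exact: (dotR_deltal _ (weight_rowR_r i)).
Qed.

Section WeightVertex.
Hypothesis f_neq0 : f != 0.
Variable a : 'I_n -> R.
Hypotheses (a_feasible : wfeasible a) (a_vertex : wvertex a).

Let a_admissible := (weight_feasibleE a).1 a_feasible.

Lemma weight_vertex_touches : exists2 m0, m0 \in s & dotR a (eR m0) = 1.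
Proof.
apply: contrapT => Hn; have [Ha Hm] := a_admissible.
have Z : forall i, a i = 0.
  apply: a_vertex => k /weight_tightP [[m Hm' [E _]]|[i [Ei ->]]] //.
  by exfalso; apply: Hn; exists m.
have [m Hms] := msupp_neq_nil f_neq0; have := Hm m Hms.
by rewrite /dotR big1 ?ler10 // => i _; rewrite Z mul0r.
Qed.

Lemma weight_vertex_mf : mf f a = 1.
Proof.
have [m0 Hm0 E0] := weight_vertex_touches; have [Ha Hm] := a_admissible.
exact: mf_attained Ha Hm0 E0 Hm.
Qed.

Lemma weight_vertex_pos : exists j, 0 < a j.
Proof.
apply: contrapT => Hn; have [m0 Hm0] := weight_vertex_touches.
have Z i : a i = 0.
  apply/eqP; rewrite eq_le a_admissible.1 andbT leNgt.
  by apply/negP => H; apply: Hn; exists i.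
rewrite /dotR big1 => [/eqP|i _]; last by rewrite Z mul0r.
by rewrite eq_sym oner_eq0.
Qed.

(* A vertex spans a ray of the dual fan: a weight [b] with the same
   [gamma_f] vanishes where [a] does and is proportional to [a] on the
   support points of the face, and these equations determine [a]. *)
Lemma weight_vertex_ray b : nonneg b -> (forall y, gammaf f b y <-> gammaf f a y) ->
  exists2 t, 0 < t & forall i, b i = t * a i.
Proof.
move=> Hb Hg; have [m0 Hm0 E0] := weight_vertex_touches.
have Mf := weight_vertex_mf; have [j0 Hj0] := weight_vertex_pos.
pose ey i := fun j => eR m0 j + 1 * (i == j)%:R.
have NPey i : NP (ey i).
  by apply: (newton_plus_mono (newton_plus_msupp Hm0)) => j; rewrite /ey lerDl mul1r ler0n.
have dot_ey c i : dotR c (ey i) = dotR c (eR m0) + c i.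
  by rewrite /ey dotR_addZr mul1r dotR_deltar.
have Gm m : m \in s -> dotR a (eR m) = 1 -> dotR b (eR m) = mf f b.
  move=> Hms Em; have : gammaf f a (eR m) by split; [exact: newton_plus_msupp|rewrite Mf].
  by move/Hg => [].
have Gb0 i : a i = 0 -> b i = 0.
  move=> Ai; have : gammaf f a (ey i) by split => //; rewrite dot_ey E0 Ai addr0.
  by move/Hg => [_]; rewrite dot_ey (Gm _ Hm0 E0); lra.
have Hbd : forall i, b i + - mf f b * a i = 0.
  apply: a_vertex => k /weight_tightP [[m Hms [Em ->]]|[i [Ai ->]]].
    by rewrite dotRC dotR_addZr !(dotRC (eR m)) Em (Gm _ Hms Em); ring.
  by rewrite Ai (Gb0 _ Ai) mulr0 addr0.
have Hbt i : b i = mf f b * a i by have := Hbd i; lra.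
exists (mf f b) => //; rewrite lt_def mf_ge0 // andbT.
apply/eqP => Z; have : gammaf f b (ey j0).
  by split => //; rewrite Z /dotR big1 // => i _; rewrite Hbt Z !mul0r.
by move/Hg => [_]; rewrite dot_ey E0 Mf; lra.
Qed.

(* Rescaling the (rational) vertex to a primitive integer vector. *)
Lemma weight_vertex_dual1_plus :
  exists u : 'I_n -> nat, dual1_plus f u /\ Defs.ratio f u = 1 - sR a.
Proof.
have [m0 Hm0 E0] := weight_vertex_touches; have [Ha Hm] := a_admissible.
have Mf := weight_vertex_mf; have [j0 Hj0] := weight_vertex_pos.
have [q Hq] := vertex_rational
  (a_vertex : vertex (fun k j => (weight_row k j)%:R) (fun k => (weight_rhs k)%:R) a).
have Hq0 j : 0 <= q j by rewrite -(ler0q R) -Hq; exact: Ha.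
have [w [s0 [Hs0 Hw]]] := nat_multiple_of_rat R Hq0.
have Hwnz : exists i, w i != 0%N.
  exists j0; rewrite -(pnatr_eq0 R) Hw -Hq mulf_neq0 //; exact: lt0r_neq0.
have [u [t [Ht Hu Hgcd Hnz]]] := primitive_nat_multiple R Hwnz.
pose c := t * s0; have Hc : 0 < c by rewrite mulr_gt0.
have Nu i : natR R u i = c * a i by rewrite /natR Hu Hw -Hq /c mulrA.
have DU x : dotR (natR R u) x = c * dotR a x.
  by rewrite /dotR mulr_sumr; apply: eq_bigr => i _; rewrite Nu mulrA.
have Nn : nonneg (natR R u) by move=> i; rewrite /natR ler0n.
have Mfu : mf f (natR R u) = c.
  apply: (mf_attained Nn Hm0); first by rewrite DU E0 mulr1.
  move=> m Hms; rewrite DU -[X in X <= _]mulr1.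
  by apply: ler_wpM2l; [exact: ltW|exact: Hm].
have Geq y : gammaf f (natR R u) y <-> gammaf f a y.
  rewrite /gammaf Mfu Mf DU; split => -[H1 H2]; split => //; last by rewrite H2 mulr1.
  by apply: (mulfI (lt0r_neq0 Hc)); rewrite H2 mulr1.
exists u; split.
  split; last by rewrite Mfu.
  split => // b Hb Hgb.
  have [t' Ht' Hbt] : exists2 t', 0 < t' & forall i, b i = t' * a i.
    by apply: weight_vertex_ray => // y; rewrite Hgb Geq.
  exists (t' / c); first by rewrite divr_gt0.
  by apply: funext => i; rewrite Hbt Nu; field; exact: lt0r_neq0.
rewrite /Defs.ratio Mfu.
have -> : sR (natR R u) = c * sR a by rewrite /sR mulr_sumr; apply: eq_bigr => i _; rewrite Nu.
by field; exact: lt0r_neq0.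
Qed.

End WeightVertex.

Lemma exists_dual1_plus_ratio_ge a0 : f != 0 -> admissible a0 ->
  exists u, dual1_plus f u /\ 1 - sR a0 <= Defs.ratio f u.
Proof.
move=> Hf /weight_feasibleE Ha0.
have [a [Ha Va Da]] := exists_vertex_le weight_sign_constraints (fun _ => ltr01) Ha0.
have [u [Du Ru]] := weight_vertex_dual1_plus Hf Ha Va.
by exists u; split => //; rewrite Ru; apply: lerB => //; rewrite -!dotR1.
Qed.

End NewtonPolyhedron.

Section Farkas.
Variables (R : realType) (n : nat) (f : {mpoly R[n]}).
Local Notation s := (msupp f).
Local Notation N := (size (msupp f)).
Local Notation NP := (newton_plus f).
Local Notation eR := (expR R).

(* The system in the barycentric coordinates [x] of [1 \in Gamma_+(f)]:
   [x >= 0], [\sum x = 1] and [\sum_j x_j nu_j <= 1] coordinatewise. *)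
Definition hull_system : seq (constraint R) :=
  [seq (fun k => - (k == j)%:R, 0) | j <- iota 0 N] ++
  [:: (fun _ => 1, 1); (fun _ => -1, -1)] ++
  [seq (fun j => ((nth 0%MM s j) i)%:R, 1) | i <- enum 'I_n].

Let big_msupp_ord (F : 'X_{1..n} -> R) :
  \sum_(m <- s) F m = \sum_(j < N) F (nth 0%MM s j).
Proof. by rewrite (big_nth 0%MM) big_mkord. Qed.

Let dotm_delta (x : nat -> R) j : (j < N)%N -> dotm N (fun k => - (k == j)%:R) x = - x j.
Proof.
move=> Hj; rewrite /dotm (bigD1 (Ordinal Hj)) //= eqxx mulNr mul1r big1 ?addr0 //.
by move=> i /negbTE Hi; rewrite -(inj_eq val_inj) /= in Hi; rewrite Hi oppr0 mul0r.
Qed.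

Lemma hull_system_infeasible : ~ NP (fun _ => 1) ->
  forall x, ~ satisfies N hull_system x.
Proof.
move=> nNP x Hx; apply: nNP.
have Hx0 j : (j < N)%N -> 0 <= x j.
  move=> Hj; have := Hx (fun k => - (k == j)%:R, 0).
  rewrite dotm_delta // oppr_le0; apply; rewrite In_cat; left; rewrite In_map.
  by exists j; split => //; apply: In_mem; rewrite mem_iota.
pose lam m := if m \in s then x (index m s) else 0.
have Lnth (j : 'I_N) : lam (nth 0%MM s j) = x j.
  by rewrite /lam mem_nth // index_uniq // msupp_uniq.
exists lam; split.
- by move=> m; rewrite /lam; case: ifP => // Hm; apply: Hx0; rewrite index_mem.
- rewrite big_msupp_ord; under eq_bigr => j _ do rewrite Lnth.
  have E1 : dotm N (fun _ => 1) x = \sum_(j < N) x j.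
    by apply: eq_bigr => j _; rewrite mul1r.
  have E2 : dotm N (fun _ => -1) x = - \sum_(j < N) x j.
    by rewrite /dotm -sumrN; apply: eq_bigr => j _; rewrite mulN1r.
  have /Hx : List.In (fun _ => 1, 1 : R) hull_system by rewrite In_cat; right; left.
  have /Hx : List.In (fun _ => -1, -1 : R) hull_system by rewrite In_cat; right; right; left.
  rewrite /= E1 E2; lra.
- move=> i; rewrite big_msupp_ord; under eq_bigr => j _ do rewrite Lnth.
  have /Hx : List.In (fun j => ((nth 0%MM s j) i)%:R, 1 : R) hull_system.
    rewrite In_cat; right; right; right; rewrite In_map.
    by exists i; split => //; apply: In_mem; rewrite mem_enum.
  rewrite /= /dotm => H.
  by rewrite (eq_bigr (fun j : 'I_N => (nth 0%MM s j i)%:R * x j)) // => j _; rewrite mulrC.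
Qed.

(* The general nonnegative combination of the rows of [hull_system]. *)
Definition hull_combination (g : nat -> R) (h : R) :=
  exists (y : nat -> R) (z : 'I_n -> R) (al be : R),
  [/\ (forall j, 0 <= y j), (forall i, 0 <= z i), 0 <= al /\ 0 <= be,
      (forall k, g k = - y k + (al - be) + \sum_i z i * ((nth 0%MM s k) i)%:R)
    & al - be + \sum_i z i <= h].

Lemma hull_combination_row g h : List.In (g, h) hull_system -> hull_combination g h.
Proof.
rewrite In_cat In_map => -[[j [_ [-> ->]]]|[[<- <-]|[[<- <-]|/In_map [i [_ [-> ->]]]]]].
- exists (fun k => (k == j)%:R), (fun _ => 0), 0, 0.
  split; [by move=> k; rewrite ler0n|by []|by []| |].
  + by move=> k; rewrite big1 ?subrr ?addr0 // => i _; rewrite mul0r.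
  + by rewrite big1 ?subrr ?addr0.
- exists (fun _ => 0), (fun _ => 0), 1, 0.
  split; [by []|by []|by rewrite ler01| |].
  + by move=> k; rewrite big1 ?subr0 ?addr0 ?oppr0 ?add0r // => i _; rewrite mul0r.
  + by rewrite big1 ?subr0 ?addr0.
- exists (fun _ => 0), (fun _ => 0), 0, 1.
  split; [by []|by []|by rewrite ler01| |].
  + by move=> k; rewrite big1 ?sub0r ?addr0 ?oppr0 ?add0r // => i _; rewrite mul0r.
  + by rewrite big1 ?sub0r ?addr0.
- exists (fun _ => 0), (fun i' => (i == i')%:R), 0, 0.
  split; [by []|by move=> i'; rewrite ler0n|by []| |].
  + move=> k; rewrite subrr oppr0 !add0r (bigD1 i) //= eqxx mul1r big1 ?addr0 //.
    by move=> i' /negbTE; rewrite eq_sym => ->; rewrite mul0r.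
  + rewrite subrr add0r (bigD1 i) //= eqxx big1 ?addr0 //.
    by move=> i' /negbTE; rewrite eq_sym => ->.
Qed.

Lemma consequence_hull_combination g h :
  consequence hull_system g h -> hull_combination g h.
Proof.
elim => {g h} [g h|||g h h' le _ [y [z [a [b [Y Z AB G H]]]]]|
  g g' h E _ [y [z [a [b [Y Z AB G H]]]]]]; first exact: hull_combination_row.
- move=> g1 h1 g2 h2 _ [y1 [z1 [a1 [b1 [Y1 Z1 [A1 B1] G1 H1]]]]]
    _ [y2 [z2 [a2 [b2 [Y2 Z2 [A2 B2] G2 H2]]]]].
  exists (fun j => y1 j + y2 j), (fun i => z1 i + z2 i), (a1 + a2), (b1 + b2); split.
  + by move=> j; rewrite addr_ge0.
  + by move=> i; rewrite addr_ge0.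
  + by split; rewrite addr_ge0.
  + move=> k; rewrite G1 G2 /=.
    have -> : \sum_(i < n) (z1 i + z2 i) * (nth 0%MM s k i)%:R =
        \sum_(i < n) z1 i * (nth 0%MM s k i)%:R + \sum_(i < n) z2 i * (nth 0%MM s k i)%:R.
      by rewrite -big_split; apply: eq_bigr => i _; rewrite mulrDl.
    ring.
  + by rewrite big_split /=; lra.
- move=> c g h Hc _ [y [z [a [b [Y Z [A B] G H]]]]].
  exists (fun j => c * y j), (fun i => c * z i), (c * a), (c * b); split.
  + by move=> j; rewrite mulr_ge0.
  + by move=> i; rewrite mulr_ge0.
  + by split; rewrite mulr_ge0.
  + move=> k; rewrite /= G.
    have -> : \sum_(i < n) c * z i * (nth 0%MM s k i)%:R =
        c * \sum_(i < n) z i * (nth 0%MM s k i)%:R.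
      by rewrite mulr_sumr; apply: eq_bigr => i _; rewrite mulrA.
    ring.
  + by rewrite -mulr_sumr -mulrBr -mulrDr; exact: ler_wpM2l.
- by exists y, z, a, b; split => //; apply: le_trans le.
- by exists y, z, a, b; split => // k; rewrite -E.
Qed.

Lemma admissible_of_notin_newton_plus : ~ NP (fun _ => 1) ->
  exists a, admissible f a /\ sR a < 1.
Proof.
move=> /hull_system_infeasible /fourier_motzkin [g [h [Hd Hg Hh]]].
have [y [z [al [be [Y Z [A B] G H]]]]] := consequence_hull_combination Hd.
pose mu := be - al.
have Hz m : m \in s -> mu <= dotR z (eR m).
  move=> Hm; have Hk : (index m s < N)%N by rewrite index_mem.
  have := G (index m s); rewrite Hg // nth_index // => E.
  by have := Y (index m s); rewrite /mu /dotR /expR; lra.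
have Sz : 0 <= \sum_i z i by apply: sumr_ge0 => i _.
have Hmu : 0 < mu by rewrite /mu; lra.
exists (fun i => z i / mu); split.
- split=> [i|m Hm]; first by rewrite divr_ge0 // ltW.
  rewrite (_ : dotR _ _ = dotR z (eR m) / mu).
    by rewrite ler_pdivlMr // mul1r; apply: Hz.
  by rewrite /dotR mulr_suml; apply: eq_bigr => i _; rewrite mulrAC.
- by rewrite /sR -mulr_suml ltr_pdivrMr // mul1r /mu; lra.
Qed.

End Farkas.

Section LeadingExponent.
Variables (R : realType) (n : nat) (f : {mpoly R[n]}).
Local Notation NP := (newton_plus f).
Local Notation one := (fun _ : 'I_n => 1 : R).

Lemma ratio_le1 u : dual1_plus f u -> Defs.ratio f u <= 1.
Proof.
move=> [_ Hm]; rewrite /Defs.ratio lerBlDr lerDl; apply: divr_ge0 (ltW Hm).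
by apply: sumr_ge0 => i _; rewrite /natR ler0n.
Qed.

Lemma ratio_le_Le u : dual1_plus f u -> Defs.ratio f u <= Le f.
Proof.
move=> Hu; apply: ub_le_sup; last by right; exists u.
by exists 1 => r [->|[v [Hv ->]]]; [exact: ler01|exact: ratio_le1].
Qed.

Lemma Le_eq0 : (forall u, dual1_plus f u -> Defs.ratio f u <= 0) -> Le f = 0.
Proof.
move=> H; apply/eqP; rewrite eq_le; apply/andP; split.
  by apply: ge_sup; [exists 0; left|move=> r [->|[v [Hv ->]]]; [exact: lexx|exact: H]].
apply: ub_le_sup; last by left.
by exists 1 => r [->|[v [Hv ->]]]; [exact: ler01|exact: ratio_le1].
Qed.

Lemma Le_gt0 : f != 0 -> ~ NP one -> 0 < Le f.
Proof.
move=> Hf /admissible_of_notin_newton_plus [a0 [Ha0 Sa0]].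
have [u [Du Ru]] := exists_dual1_plus_ratio_ge Hf Ha0.
by apply: lt_le_trans (ratio_le_Le Du); apply: lt_le_trans Ru; rewrite subr_gt0.
Qed.

(* [m_f(a) <= <a, 1> = s(a)] when [1] is in [Gamma_+(f)]. *)
Lemma ratio_le0 u : NP one -> dual1_plus f u -> Defs.ratio f u <= 0.
Proof.
move=> NP1 [_ Hmf]; rewrite /Defs.ratio subr_le0 ler_pdivlMr // mul1r -dotR1.
by apply: mf_le_dotR => // i; rewrite /natR ler0n.
Qed.

Lemma face_normal_ge0 c y : face f c y -> nonneg c.
Proof.
move=> [Hy Hmin] i; pose z := fun j => y j + 1 * (i == j)%:R.
have /Hmin : NP z by apply: (newton_plus_mono Hy) => j; rewrite /z mul1r lerDl ler0n.
by rewrite /z dotR_addZr mul1r dotR_deltar lerDl.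
Qed.

(* If [c = 0] the face is all of [Gamma_+(f)], which is unbounded. *)
Lemma compact_face_normal_neq0 c : (0 < n)%N -> compact_face f c -> exists i, c i != 0.
Proof.
move=> Hn [[y0 [Hy0 _]] [B HB]]; apply: contrapT => Hc.
have Dz x : dotR c x = 0.
  rewrite /dotR big1 // => i _; apply/eqP; rewrite mulf_eq0; apply/orP; left.
  by apply/negPn/negP => Hi; apply: Hc; exists i.
pose i0 := Ordinal Hn; pose y := fun j => y0 j + (1 + `|B|).
have Fy : face f c y.
  split=> [|z _]; last by rewrite !Dz.
  by apply: (newton_plus_mono Hy0) => j; rewrite /y lerDl addr_ge0.
have Hy0i := newton_plus_ge0 i0 Hy0; have HB0 := ler_norm B; have HyB := HB y Fy i0.
by rewrite /y ger0_norm ?addr_ge0 ?normr_ge0 // in HyB; lra.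
Qed.

Lemma face1_normal_admissible c : face f c one -> (exists i, c i != 0) ->
  admissible f (fun i => c i / sR c) /\ sR (fun i => c i / sR c) = 1.
Proof.
move=> Hface [i1 Hi1]; have Hc0 := face_normal_ge0 Hface.
have Hsc : 0 < sR c.
  rewrite /sR (bigD1 i1) //= ltr_pwDl ?lt0r ?Hi1 ?Hc0 //.
  by apply: sumr_ge0 => i _.
split; last by rewrite /sR -mulr_suml divff // lt0r_neq0.
split=> [i|m Hm]; first by rewrite divr_ge0 // ltW.
rewrite (_ : dotR _ _ = dotR c (expR R m) / sR c).
  rewrite ler_pdivlMr // mul1r -dotR1; apply: Hface.2.
  exact: newton_plus_msupp.
by rewrite /dotR mulr_suml; apply: eq_bigr => i _; rewrite mulrAC.
Qed.

Lemma Le_boundary : f != 0 -> (0 < n)%N -> newton_boundary f one ->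
  Le f = 0 /\ exists u, dual1_max f u.
Proof.
move=> Hf Hn [c [Hc Hface]].
have L0 : Le f = 0 by apply: Le_eq0 => u; apply: ratio_le0 Hface.1.
have [Ha0 Sa0] := face1_normal_admissible Hface (compact_face_normal_neq0 Hn Hc).
have [u [Du Ru]] := exists_dual1_plus_ratio_ge Hf Ha0.
split => //; exists u; split => //; apply/eqP; rewrite L0 eq_le.
by rewrite (ratio_le0 Hface.1 Du) /=; apply: le_trans Ru; rewrite Sa0 subrr.
Qed.

(* Moving [1] towards the origin along [u] stays in [Gamma_+(f)] and
   strictly decreases [<u, .>] below [s(u)]. *)
Lemma ratio_lt0 u : newton_interior f one -> dual1_plus f u -> Defs.ratio f u < 0.
Proof.
move=> [e He HNP] [[[i0 Hi0] _ _] Hmf].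
pose b := natR R u.
have Hb : nonneg b by move=> i; rewrite /b /natR ler0n.
pose sg := sR b; have Hsg : 0 <= sg by apply: sumr_ge0.
pose dl := e / (1 + sg).
have Hdl : 0 < dl by rewrite divr_gt0 // ltr_pwDl.
have Hdls : dl * sg < e by rewrite /dl mulrAC ltr_pdivrMr ?ltr_pwDl //; nra.
pose y := fun i => 1 + (- dl) * b i.
have NPy : NP y.
  apply: HNP => i; rewrite /y.
  have -> : 1 + - dl * b i - 1 = - (dl * b i) by ring.
  rewrite normrN ger0_norm; last by rewrite mulr_ge0 // ltW.
  apply: le_lt_trans Hdls; apply: ler_wpM2l; first exact: ltW.
  by rewrite /sg /sR (bigD1 i) //= lerDl; apply: sumr_ge0.
have Mle := mf_le_dotR Hb NPy.
rewrite /y dotR_addZr dotR1 -/sg in Mle.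
have Hbb : 0 < dotR b b.
  rewrite /dotR (bigD1 i0) //= ltr_pwDl ?mulr_gt0 // ?/b ?/natR ?ltr0n ?lt0n //.
  by apply: sumr_ge0 => i _; rewrite mulr_ge0.
have Hlt : mf f b < sg by nra.
by rewrite /Defs.ratio subr_lt0 ltr_pdivlMr // mul1r.
Qed.

Lemma Le_interior : newton_interior f one -> Le f = 0 /\ forall u, ~ dual1_max f u.
Proof.
move=> Hint; have L0 : Le f = 0 by apply: Le_eq0 => u /(ratio_lt0 Hint) /ltW.
by split => // u [Du]; apply/eqP; rewrite L0 lt_eqF // ratio_lt0.
Qed.

End LeadingExponent.

(* In dimension 0 a nonzero polynomial is a nonzero constant. *)
Lemma meval0_dim_gt0 (R : realType) (n : nat) (f : {mpoly R[n]}) :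
  f != 0 -> meval (fun _ => 0) f = 0 -> (0 < n)%N.
Proof.
case: n f => // f Hf; rewrite mevalE.
have Heq (m1 m2 : 'X_{1..0}) : m1 = m2 by apply/mnmP => -[].
have := msupp_uniq f.
case E: (msupp f) => [|m0 [|m1 t]]; first by move/eqP: E; rewrite msupp_eq0 (negbTE Hf).
  move=> _; rewrite big_seq1 big_ord0 mulr1 => /eqP.
  by rewrite mcoeff_eq0 E mem_head.
by rewrite /= (Heq m0 m1) inE eqxx.
Qed.

Unset Implicit Arguments.

Theorem mainTheorem4 (R : realType) (n : nat) (f : {mpoly R[n]}) :
  f != 0 ->
  nondegenerate_newton f ->
  meval (fun _ : 'I_n => (0 : R)) f = 0 ->
  [/\ ~ newton_plus f (fun _ => 1) -> 0 < Le f,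
      newton_boundary f (fun _ => 1) ->
        Le f = 0 /\ exists a : 'I_n -> nat, dual1_max f a
    & newton_interior f (fun _ => 1) ->
        Le f = 0 /\ forall a : 'I_n -> nat, ~ dual1_max f a].
Proof.
move=> Hf _ Hf0; split; first exact: Le_gt0.
  exact: Le_boundary Hf (meval0_dim_gt0 Hf Hf0).
exact: Le_interior.
Qed.
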